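(* Let $G=G_{A,B}$ be a DSR graph (for some $A\in\mathbb{R}^{n\times m}$, $B\in\mathbb{R}^{m\times n}$) which is steady. Then every (nonempty) closed walk in $G$ is an s-walk.
   Context: DSR graphs: for $A\in\mathbb{R}^{n\times m}$, $B\in\mathbb{R}^{m\times n}$, $G_{A,B}$ is the signed, labelled bipartite digraph with S-vertices $S_1,\dots,S_n$ and R-vertices $R_1,\dots,R_m$, with an arc $R_j\to S_i$ of sign $\mathrm{sign}(A_{ij})$ iff $A_{ij}\ne0$ and an arc $S_i\to R_j$ of sign $\mathrm{sign}(B_{ji})$ iff $B_{ji}\ne0$; a pair of antiparallel arcs of the same sign is regarded as a single undirected edge, traversable in both directions. An edge arising from $A_{ij}\ne0$ (R-to-S or undirected) has label $|A_{ij}|$; an edge with only S-to-R orientation has label $\infty$. A walk is an alternating sequence of vertices and edges traversing each edge consistently with its orientation, with repetitions of vertices and edges allowed; it is closed if its first and last vertices coincide. A cycle is a nonempty closed walk that repeats no vertex except first$=$last (a 2-cycle requires two distinct edges between the same vertices). A closed walk $(e_1,\dots,e_{2r})$ is an s-walk if all its labels are finite and $\prod_{i=1}^r l(e_{2i-1})=\prod_{i=1}^r l(e_{2i})$; an s-cycle is a cycle that is an s-walk. $G$ is steady if all its cycles are s-cycles. *)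

From HB Require Import structures.
From mathcomp Require Import all_boot all_order all_algebra.
From mathcomp Require Import reals.
Set Implicit Arguments. Unset Strict Implicit. Unset Printing Implicit Defensive.
Import Order.TTheory GRing.Theory Num.Theory.
Local Open Scope ring_scope.

Section DSR.
Variables (R : realType) (n m : nat) (A : 'M[R]_(n, m)) (B : 'M[R]_(m, n)).

(* Vertices: inl i = S_i, inr j = R_j. *)
Definition dsr_vertex := ('I_n + 'I_m)%type.

(* Edges between S_i and R_j: (i, j, true) is the edge arising from
   A_ij <> 0 (an arc R_j -> S_i, or an undirected edge when merged with the
   S_i -> R_j arc of the same sign); (i, j, false) is the S_i -> R_j arc
   arising from B_ji <> 0 when it is NOT merged. *)
Definition dsr_edge := ('I_n * 'I_m * bool)%type.

Definition dsr_merged (i : 'I_n) (j : 'I_m) : bool :=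
  [&& A i j != 0, B j i != 0 & Num.sg (A i j) == Num.sg (B j i)].

Definition dsr_edge_exists (e : dsr_edge) : bool :=
  let: (i, j, k) := e in
  if k then A i j != 0 else (B j i != 0) && ~~ dsr_merged i j.

Definition dsr_traverses (e : dsr_edge) (u v : dsr_vertex) : bool :=
  let: (i, j, k) := e in
  dsr_edge_exists e &&
  (if k then ((u == inr j) && (v == inl i)) ||
             [&& dsr_merged i j, u == inl i & v == inr j]
   else (u == inl i) && (v == inr j)).

(* label: Some x for finite label x, None for infinity *)
Definition dsr_label (e : dsr_edge) : option R :=
  let: (i, j, k) := e in if k then Some `|A i j| else None.

Fixpoint dsr_is_walk (v0 : dsr_vertex) (s : seq (dsr_edge * dsr_vertex)) : bool :=
  match s with
  | [::] => true
  | (e, v) :: s' => dsr_traverses e v0 v && dsr_is_walk v s'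
  end.

Definition dsr_closed_walk (v0 : dsr_vertex) (s : seq (dsr_edge * dsr_vertex)) :=
  [&& dsr_is_walk v0 s, (0 < size s)%N & last v0 (map snd s) == v0].

(* cycle: nonempty closed walk, no repeated vertex except first = last,
   and no repeated edge (so a 2-cycle uses two distinct edges). *)
Definition dsr_cycle (v0 : dsr_vertex) (s : seq (dsr_edge * dsr_vertex)) :=
  [&& dsr_closed_walk v0 s, uniq (map snd s) & uniq (map fst s)].

(* s-walk: closed walk (e_1,...,e_2r) with all labels finite and the
   product of odd-indexed labels equal to the product of even-indexed ones
   (1-based indexing; 0-based position k is e_{k+1}). *)
Definition dsr_s_walk (v0 : dsr_vertex) (s : seq (dsr_edge * dsr_vertex)) :=
  let ls := [seq odflt 0 (dsr_label p.1) | p <- s] in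
  [&& dsr_closed_walk v0 s,
      all (fun p => dsr_label p.1 != None) s &
      \prod_(k < size s | ~~ odd k) ls`_k == \prod_(k < size s | odd k) ls`_k].

Definition dsr_steady : Prop :=
  forall v0 s, dsr_cycle v0 s -> dsr_s_walk v0 s.

End DSR.

From HB Require Import structures.
From mathcomp Require Import all_boot all_order all_algebra.
From mathcomp Require Import reals.
From mathcomp Require Import zify.
Set Implicit Arguments. Unset Strict Implicit. Unset Printing Implicit Defensive.
Import Order.TTheory GRing.Theory Num.Theory.
Local Open Scope ring_scope.

(* A closed walk that repeats a
   vertex splits into two shorter closed walks, and the s-walk property is
   stable under inserting one closed walk into another, because closed walks
   have even length (the graph is bipartite).  A closed walk repeating no
   vertex but some edge can only go back and forth along one undirected
   edge, which is trivially an s-walk; one repeating neither is a cycle. *)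

Lemma not_uniq_map_split (T U : eqType) (f : T -> U) (s : seq T) :
  ~~ uniq (map f s) ->
  exists s1 x s2 y s3, s = s1 ++ x :: s2 ++ y :: s3 /\ f x = f y.
Proof.
elim: s => [|a t IH] //=; rewrite negb_and negbK => /orP[|/IH].
  by case/mapP => y /splitPr[p1 p2] fay; exists [::], a, p1, y, p2.
by case=> s1 [x [s2 [y [s3 [-> fxy]]]]]; exists (a :: s1), x, s2, y, s3.
Qed.

Lemma uniq_cat_notin (T : eqType) (s1 s2 : seq T) x :
  uniq (s1 ++ x :: s2) -> (x \notin s1) && (x \notin s2).
Proof. by rewrite uniq_catC /= mem_cat negb_or => /andP[/andP[-> ->]]. Qed.

Lemma last_map_mem (T U : eqType) (f : T -> U) (x0 : U) (s : seq T) :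
  s != [::] -> last x0 (map f s) \in map f s.
Proof. by case: s => [|z s] //= _; apply: mem_last. Qed.

Section AlternatingProducts.
Variable R : comPzSemiRingType.

Fixpoint prod_even (l : seq R) : R :=
  if l is x :: l' then x * prod_odd l' else 1
with prod_odd (l : seq R) : R :=
  if l is _ :: l' then prod_even l' else 1.

Lemma prod_even_odd_big (l : seq R) :
  \prod_(k < size l | ~~ odd k) l`_k = prod_even l /\
  \prod_(k < size l | odd k) l`_k = prod_odd l.
Proof.
elim: l => [|x l [IHe IHo]]; first by rewrite !big_ord0.
rewrite [size _]/=; split.
  rewrite big_mkcond big_ord_recl /= -IHo [X in _ = _ * X]big_mkcond /=.
  by congr (_ * _); apply: eq_bigr => k _; rewrite negbK.
rewrite big_mkcond big_ord_recl /= -IHe [RHS]big_mkcond /= mul1r.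
exact: eq_bigr.
Qed.

Lemma prod_even_odd_cat (l1 l2 : seq R) :
  prod_even (l1 ++ l2) =
    prod_even l1 * (if odd (size l1) then prod_odd l2 else prod_even l2) /\
  prod_odd (l1 ++ l2) =
    prod_odd l1 * (if odd (size l1) then prod_even l2 else prod_odd l2).
Proof.
elim: l1 => [|x l [IHe IHo]] /=; first by rewrite !mul1r.
by rewrite IHe IHo; case: (odd _); rewrite /= ?mulrA.
Qed.

Lemma prod_even_odd_insert (l1 l2 l3 : seq R) :
  ~~ odd (size l2) -> prod_even l2 = prod_odd l2 ->
  prod_even (l1 ++ l3) = prod_odd (l1 ++ l3) ->
  prod_even (l1 ++ l2 ++ l3) = prod_odd (l1 ++ l2 ++ l3).
Proof.
move=> /negbTE ev2 bal2.
have [-> ->] := prod_even_odd_cat l1 (l2 ++ l3).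
have [-> ->] := prod_even_odd_cat l2 l3.
have [-> ->] := prod_even_odd_cat l1 l3.
by rewrite ev2 bal2; case: (odd _) => bal; rewrite mulrCA bal mulrCA.
Qed.

End AlternatingProducts.

Section DSRWalks.
Variables (R : realType) (n m : nat) (A : 'M[R]_(n, m)) (B : 'M[R]_(m, n)).
Notation V := (dsr_vertex n m).
Notation E := (dsr_edge n m).
Notation traverses := (dsr_traverses A B).
Notation walk := (dsr_is_walk A B).
Notation closed_walk := (dsr_closed_walk A B).
Notation s_walk := (dsr_s_walk A B).

Lemma dsr_is_walk_cat v0 s1 s2 :
  walk v0 (s1 ++ s2) = walk v0 s1 && walk (last v0 (map snd s1)) s2.
Proof. by elim: s1 v0 => [|[e v] s1 IH] v0 //=; rewrite IH andbA. Qed.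

Definition is_S_vertex (v : V) : bool := if v is inl _ then true else false.

Lemma dsr_traverses_ends (i : 'I_n) (j : 'I_m) k u v :
  traverses (i, j, k) u v ->
  (u = inr j /\ v = inl i) \/ (u = inl i /\ v = inr j).
Proof.
case: k => /andP[_]; last by case/andP=> /eqP-> /eqP->; right.
by case/orP=> [/andP[/eqP-> /eqP->]|/and3P[_ /eqP-> /eqP->]]; [left|right].
Qed.

Lemma dsr_traverses_reverse e u v u' v' :
  traverses e u v -> traverses e u' v' -> v != v' -> u = v' /\ u' = v.
Proof.
by case: e => [[i j] k] /dsr_traverses_ends[[-> ->]|[-> ->]]
  /dsr_traverses_ends[[-> ->]|[-> ->]]; rewrite ?eqxx.
Qed.

Lemma dsr_is_walk_side v0 s : walk v0 s ->
  is_S_vertex (last v0 (map snd s)) = is_S_vertex v0 (+) odd (size s).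
Proof.
elim: s v0 => [|[[[i j] k] v] s IH] v0 /=; first by rewrite addbF.
case/andP=> /dsr_traverses_ends[[-> ->]|[-> ->]] /IH ->;
  by case: (odd _).
Qed.

Lemma dsr_closed_walk_even v0 s : closed_walk v0 s -> ~~ odd (size s).
Proof.
case/and3P=> w _ /eqP l; have := dsr_is_walk_side w; rewrite l.
by case: (is_S_vertex v0); case: (odd _).
Qed.

Definition dsr_labels (s : seq (E * V)) : seq R :=
  [seq odflt 0 (dsr_label A p.1) | p <- s].

Lemma dsr_s_walkE v0 s : s_walk v0 s =
  [&& closed_walk v0 s, all (fun p => dsr_label A p.1 != None) s &
      prod_even (dsr_labels s) == prod_odd (dsr_labels s)].
Proof.
rewrite /dsr_s_walk -(size_map (fun p => odflt 0 (dsr_label A p.1)) s).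
by have [-> ->] := prod_even_odd_big (dsr_labels s).
Qed.

Lemma dsr_s_walk_insert v0 s1 s2 s3 :
  closed_walk v0 (s1 ++ s2 ++ s3) ->
  s_walk (last v0 (map snd s1)) s2 -> s_walk v0 (s1 ++ s3) ->
  s_walk v0 (s1 ++ s2 ++ s3).
Proof.
rewrite !dsr_s_walkE !all_cat => -> /and3P[cw2 -> /eqP bal2].
case/and3P=> _ /andP[-> ->] /eqP bal13 /=; apply/eqP.
move: bal13; rewrite /dsr_labels !map_cat; apply: prod_even_odd_insert bal2.
by rewrite size_map; apply: dsr_closed_walk_even cw2.
Qed.

Lemma dsr_closed_walk_split v0 s :
  closed_walk v0 s -> ~~ uniq (map snd s) ->
  exists s1 s2 s3, [/\ s = s1 ++ s2 ++ s3,
    closed_walk (last v0 (map snd s1)) s2 & closed_walk v0 (s1 ++ s3)].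
Proof.
move=> cw /not_uniq_map_split[s1 [x [s2 [y [s3 [Es xy]]]]]].
exists (rcons s1 x), (rcons s2 y), s3.
have lx : last v0 (map snd (rcons s1 x)) = x.2 by rewrite map_rcons last_rcons.
have ly : last x.2 (map snd (rcons s2 y)) = x.2 by rewrite map_rcons last_rcons xy.
have wE : s = rcons s1 x ++ rcons s2 y ++ s3 by rewrite Es !cat_rcons.
move: cw; rewrite wE => /and3P[].
rewrite !dsr_is_walk_cat !map_cat !last_cat lx ly => /and3P[w1 w2 w3] _ l.
split=> //; apply/and3P; split=> //.
- by rewrite size_rcons.
- by rewrite ly.
- by rewrite dsr_is_walk_cat w1 lx.
- by rewrite size_cat size_rcons.
- by rewrite map_cat last_cat lx.
Qed.

Lemma dsr_s_walk_edge_repeat v0 s :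
  closed_walk v0 s -> uniq (map snd s) -> ~~ uniq (map fst s) -> s_walk v0 s.
Proof.
move=> cw uv /not_uniq_map_split[s1 [[e x] [s2 [[e' y] [s3 [Es /= ee']]]]]].
subst s e'; case/and3P: (cw) => w _ /eqP l.
move: uv; rewrite !(map_cat, map_cons) /= => uv.
have /andP[_] := uniq_cat_notin uv.
rewrite mem_cat in_cons !negb_or => /and3P[nx2 nxy _].
have /andP[] : (y \notin map snd s1 ++ x :: map snd s2) && (y \notin map snd s3).
  by apply: uniq_cat_notin; rewrite -catA.
rewrite mem_cat in_cons !negb_or => /and3P[ny1 _ _] ny3.
move: w; rewrite dsr_is_walk_cat /= dsr_is_walk_cat /=.
case/andP=> _ /andP[tx /andP[_ /andP[ty _]]].
have [ey ex] := dsr_traverses_reverse tx ty nxy.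
have s2E : s2 = [::].
  by apply/eqP; apply: contraNT nx2 => /(last_map_mem snd x); rewrite ex.
have s1E : s1 = [::].
  by apply/eqP; apply: contraNT ny1 => /(last_map_mem snd v0); rewrite ey.
subst s1 s2; rewrite /= in ey; subst y.
have s3E : s3 = [::].
  by apply/eqP; apply: contraNT ny3 => /(last_map_mem snd v0); move: l => /= ->.
subst s3; move: e tx ty cw {ex l uv} => [[i j] [|]] /= tx ty cw.
  by rewrite dsr_s_walkE cw /= eqxx.
by move: ty; case/andP: tx => _ /andP[/eqP-> _] /andP[_ /andP[]].
Qed.

End DSRWalks.

Theorem lemma2p7 (R : realType) (n m : nat) (A : 'M[R]_(n, m)) (B : 'M[R]_(m, n)) :
  dsr_steady A B ->
  forall (v0 : dsr_vertex n m) (s : seq (dsr_edge n m * dsr_vertex n m)),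
    dsr_closed_walk A B v0 s -> dsr_s_walk A B v0 s.
Proof.
move=> steady v0 s; have [N] := ubnP (size s).
elim: N v0 s => // N IH v0 s /ltnSE sizeN cw.
have [uv|] := boolP (uniq (map snd s)).
  have [ue|] := boolP (uniq (map fst s)).
    by apply: steady; rewrite /dsr_cycle cw uv ue.
  exact: dsr_s_walk_edge_repeat.
case/(dsr_closed_walk_split cw)=> s1 [s2 [s3 [Es cw2 cw13]]].
have /and3P[_ pos2 _] := cw2; have /and3P[_ pos13 _] := cw13.
move: sizeN pos13; rewrite Es !size_cat => sizeN pos13.
by rewrite Es in cw *; apply: dsr_s_walk_insert; rewrite // IH // ?size_cat; lia.
Qed.
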